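(* For every word $\omega\in[n]^*$, $M_\omega B_\omega\subseteq\{x\in\mathbb{Z}^n: 0\le x\le u_\omega\}$ (coordinatewise), and $M_\omega B_\omega=u_\omega-M_\omega B_\omega$.
   Context: Let $[n]=\{1,\dots,n\}$, $e_1,\dots,e_n$ the standard basis of $\mathbb{Z}^n$; $\varepsilon$ is the empty word, $*$ concatenation. For words $\omega$ over $[n]$ define recursively $\delta^i_\omega\in\mathbb{Z}^n$: $\delta^i_\varepsilon=e_i$; $\delta^j_{\omega*j}=\delta^j_\omega$, $\delta^i_{\omega*j}=\delta^i_\omega-\delta^j_\omega$ for $i\ne j$. Let $B_\varepsilon=\{0\}$, $B_{\omega*j}=B_\omega+\{0,\delta^j_\omega\}$ (Minkowski sum). Let $M_\omega=(\delta^1_\omega\ \cdots\ \delta^n_\omega)^{-1}$ (inverse of the matrix with columns $\delta^i_\omega$). For $k\in[n]$ let $D^k=\mathrm{id}+e_k(\mathbb{1}-e_k)^T$ with $\mathbb{1}=(1,\dots,1)^T$. Define $u_\varepsilon=0$, $u_{\omega*j}=e_j+D^j u_\omega$. *)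

(* Vectors in Z^n are column vectors 'cV[int]_n; words over [n]
   are sequences of 'I_n (letters 0..n-1 stand for 1..n). *)
From HB Require Import structures.
From mathcomp Require Import all_boot all_order all_algebra.
Set Implicit Arguments. Unset Strict Implicit. Unset Printing Implicit Defensive.
Import Order.TTheory GRing.Theory Num.Theory.
Local Open Scope ring_scope.

Section Defs.
Variable n : nat.

Definition evec (i : 'I_n) : 'cV[int]_n := delta_mx i 0.

(* Recursion on the REVERSED word: (j :: r) corresponds to  rev r * j. *)
Fixpoint deltar (r : seq 'I_n) : 'I_n -> 'cV[int]_n :=
  match r with
  | [::] => evec
  | j :: r' => fun i => if i == j then deltar r' j else deltar r' i - deltar r' j
  end.

Definition delta (w : seq 'I_n) (i : 'I_n) : 'cV[int]_n := deltar (rev w) i.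

(* B_omega, as a list of vectors (a finite set, membership semantics) *)
Fixpoint Br (r : seq 'I_n) : seq 'cV[int]_n :=
  match r with
  | [::] => [:: 0]
  | j :: r' => Br r' ++ [seq b + deltar r' j | b <- Br r']
  end.

Definition B (w : seq 'I_n) : seq 'cV[int]_n := Br (rev w).

Definition Dmx (k : 'I_n) : 'M[int]_n :=
  1%:M + evec k *m (const_mx 1 - evec k)^T.

Fixpoint ur (r : seq 'I_n) : 'cV[int]_n :=
  match r with
  | [::] => 0
  | j :: r' => evec j + Dmx j *m ur r'
  end.

Definition u (w : seq 'I_n) : 'cV[int]_n := ur (rev w).

Definition deltaMx (w : seq 'I_n) : 'M[int]_n := \matrix_(a, b) delta w b a 0.

Definition Mmx (w : seq 'I_n) : 'M[rat]_n := invmx (map_mx intr (deltaMx w)).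

Definition Mapp (w : seq 'I_n) (b : 'cV[int]_n) : 'cV[rat]_n :=
  Mmx w *m map_mx intr b.

End Defs.

From HB Require Import structures.
From mathcomp Require Import all_boot all_order all_algebra.
Import Order.TTheory GRing.Theory Num.Theory.
Local Open Scope ring_scope.
Set Implicit Arguments.
Unset Strict Implicit.

(* Write a word backwards, r = rev w, so that appending a letter j
   to w is consing j onto r.  The matrix M_w is the integer matrix
   D^{j_k} ... D^{j_1} (for w = j_1 ... j_k): indeed D^j maps e_j to e_j and
   e_i - e_j to e_i (i <> j), which is exactly how the recursion for delta
   transforms the columns, so M_w delta^i_w = e_i by induction.  Hence the
   rational inverse in the statement is this integer matrix (lemma MappE).
   Extending the word by j turns M B into  D^j (M B)  united with its shift
   D^j (M B) + e_j  (lemma Mr_shift).  Both claims then follow by induction: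
   D^j replaces coordinate j by the sum of all coordinates, so it maps the box
   [0, u] into [0, D^j u], and adding e_j at most reaches e_j + D^j u
   (lemma box_step); the reflection x |-> u - x swaps the unshifted and the
   shifted halves (lemma Mr_reflect). *)

Section IntegerInverse.
Variable n : nat.

Fixpoint Mr (r : seq 'I_n) : 'M[int]_n :=
  match r with
  | [::] => 1%:M
  | j :: r' => Dmx j *m Mr r'
  end.

Lemma evecE (i k : 'I_n) : evec i k 0 = (k == i)%:R.
Proof. by rewrite /evec mxE eqxx andbT. Qed.

Lemma DmxE (j : 'I_n) (y : 'cV[int]_n) k :
  (Dmx j *m y) k 0 = if k == j then \sum_l y l 0 else y k 0.
Proof.
rewrite /Dmx mulmxDl mul1mx -mulmxA mxE [X in _ + X]mxE big_ord1 evecE mxE.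
have -> : \sum_l (const_mx 1 - evec j)^T 0 l * y l 0 = \sum_l y l 0 - y j 0.
  rewrite (bigD1 j) //= [X in _ = X - _](bigD1 j) //= !mxE eqxx andbT.
  rewrite subrr mul0r add0r addrAC subrr add0r.
  by apply: eq_bigr => l /negbTE hl; rewrite !mxE hl /= subr0 mul1r.
case: eqP => [->|_]; last by rewrite mul0r addr0.
by rewrite mul1r addrC subrK.
Qed.

Lemma sum_evec (i : 'I_n) : \sum_l evec i l 0 = 1.
Proof.
rewrite (bigD1 i) //= evecE eqxx big1 ?addr0 // => l /negbTE hl.
by rewrite evecE hl.
Qed.

Lemma D_evec (j : 'I_n) : Dmx j *m evec j = evec j.
Proof.
apply/matrixP => k l; rewrite ord1 DmxE evecE sum_evec.
by case: (k =P j).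
Qed.

Lemma D_evecB (i j : 'I_n) : i != j -> Dmx j *m (evec i - evec j) = evec i.
Proof.
move=> hij; apply/matrixP => k l; rewrite [l]ord1 DmxE.
have -> : \sum_l0 (evec i - evec j) l0 0 = 0.
  under eq_bigr do rewrite mxE [(- evec j) _ _]mxE.
  by rewrite sumrB !sum_evec subrr.
case: (k =P j) => [->|/eqP hkj]; first by rewrite evecE eq_sym (negbTE hij).
by rewrite mxE [(- evec j) _ _]mxE [evec j k 0]evecE (negbTE hkj) subr0.
Qed.

Lemma Mr_delta r (i : 'I_n) : Mr r *m deltar r i = evec i.
Proof.
elim: r i => [|j r IH] i /=; first by rewrite mul1mx.
rewrite -mulmxA; case: eqP => [->|/eqP hij]; first by rewrite IH D_evec.
by rewrite mulmxBr !IH D_evecB.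
Qed.

Lemma Mr_deltaMx (w : seq 'I_n) : Mr (rev w) *m deltaMx w = 1%:M.
Proof.
apply/matrixP => a b.
have := congr1 (fun v : 'cV[int]_n => v a 0) (Mr_delta (rev w) b).
by rewrite /= evecE !mxE => <-; apply: eq_bigr => k _; rewrite mxE.
Qed.

Lemma MappE (w : seq 'I_n) b : Mapp w b = map_mx intr (Mr (rev w) *m b).
Proof.
rewrite /Mapp /Mmx map_mxM.
have H : map_mx (intr : int -> rat) (Mr (rev w)) *m map_mx intr (deltaMx w) = 1%:M.
  by rewrite -map_mxM Mr_deltaMx map_mx1.
have [_ unit_delta] := mulmx1_unit H.
by congr (_ *m _); rewrite -[invmx _]mul1mx -H -mulmxA mulmxV // mulmx1.
Qed.

End IntegerInverse.

Section Recursion.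
Variable n : nat.
Implicit Types (r : seq 'I_n) (j : 'I_n) (b : 'cV[int]_n).

Lemma Mr_shift r j b :
  Mr (j :: r) *m (b + deltar r j) = Dmx j *m (Mr r *m b) + evec j.
Proof. by rewrite /= -!mulmxA mulmxDr Mr_delta mulmxDr D_evec. Qed.

Lemma Mr_cons r j b : Mr (j :: r) *m b = Dmx j *m (Mr r *m b).
Proof. by rewrite /= mulmxA. Qed.

Definition in_box (v y : 'cV[int]_n) : Prop := forall i, 0 <= y i 0 <= v i 0.

Lemma box_step j v y (c : int) :
  in_box v y -> 0 <= c <= 1 -> in_box (evec j + Dmx j *m v) (Dmx j *m y + c *: evec j).
Proof.
move=> hy /andP [c0 c1] i.
rewrite [(Dmx j *m y + _) i 0]mxE [(evec j + _) i 0]mxE [(c *: evec j) i 0]mxE.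
rewrite !DmxE evecE.
case: eqP => _; last by rewrite mulr0 addr0 add0r; apply: hy.
rewrite mulr1 addrC; apply/andP; split.
  by apply: addr_ge0 => //; apply: sumr_ge0 => l _; case/andP: (hy l).
by apply: lerD => //; apply: ler_sum => l _; case/andP: (hy l).
Qed.

Lemma Mr_bounds r b : b \in Br r -> in_box (ur r) (Mr r *m b).
Proof.
elim: r b => [|j r IH] b /=.
  by rewrite inE => /eqP -> i; rewrite mulmx0 mxE lexx.
rewrite mem_cat => /orP [hb|/mapP [c hc ->]].
  have := box_step j (c := 0) (IH b hb); rewrite scale0r addr0 -Mr_cons; apply.
  by rewrite lexx ler01.
have := box_step j (c := 1) (IH c hc); rewrite scale1r -Mr_shift; apply.
by rewrite ler01 lexx.
Qed.

Lemma Mr_reflect r b :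
  b \in Br r -> exists2 b', b' \in Br r & Mr r *m b' = ur r - Mr r *m b.
Proof.
elim: r b => [|j r IH] b /=.
  by rewrite inE => /eqP ->; exists 0; rewrite ?inE // mulmx0 subr0.
rewrite mem_cat => /orP [hb|/mapP [c hc ->]].
  have [b' hb' E] := IH b hb; exists (b' + deltar r j).
    by rewrite mem_cat (map_f (fun x => x + deltar r j)) ?orbT.
  by rewrite Mr_shift E Mr_cons mulmxBr addrC addrA.
have [c' hc' E] := IH c hc; exists c'; first by rewrite mem_cat hc'.
by rewrite Mr_shift Mr_cons E mulmxBr opprD [- _ - evec j]addrC addrACA subrr add0r.
Qed.

End Recursion.

Unset Implicit Arguments.

Theorem corollary3p3 (n : nat) (w : seq 'I_n) :
  (forall b, b \in B w ->
     exists x : 'cV[int]_n,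
       Mapp w b = map_mx intr x /\
       (forall i : 'I_n, 0 <= x i 0 <= u w i 0))
  /\
  (forall y : 'cV[rat]_n,
     (exists2 b, b \in B w & y = Mapp w b) <->
     (exists2 b, b \in B w & y = map_mx intr (u w) - Mapp w b)).
Proof.
split=> [b hb|y].
  by exists (Mr (rev w) *m b); split; [exact: MappE | exact: Mr_bounds].
split=> -[b hb ->]; have [b' hb' E] := Mr_reflect hb; exists b' => //.
  by rewrite !MappE E raddfB /= opprB addrC subrK.
by rewrite !MappE E raddfB.
Qed.
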